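(* Let $M$ be an $\mathbf{FB}$-module and $a:\mathbf V\otimes M\to\mathbf V\otimes M$ a map of $\mathbf{FB}$-modules, and write $$a(t^j\otimes x)=t^j\otimes\omega^{S\setminus\{j\}}(x)+\sum_{i\in S\setminus\{j\}}t^i\otimes\alpha^S_{i,j}(x)\qquad(j\in S,\ x\in M(S\setminus\{j\})),$$ where $\omega^T$ is an endomorphism of $M(T)$ and $\alpha^S_{i,j}:M(S\setminus\{j\})\to M(S\setminus\{i\})$. Then $(M,a)$ is a representation of $\underline{\mathfrak{gl}}(\mathbf V)$ if and only if: (a) the operations $\alpha$ and $\omega$ commute with themselves and with each other; and (b) for every finite set $S$ and distinct $i,j,k\in S$, $\alpha^{S\setminus\{i\}}_{j,k}\circ\alpha^{S\setminus\{k\}}_{i,j}=\alpha^{S\setminus\{j\}}_{i,k}$.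
   Context: $k$ is a commutative ring; an $\mathbf{FB}$-module is a functor from finite sets and bijections to $k$-modules; $(M\otimes N)(S)=\bigoplus_{T\subseteq S}M(T)\otimes N(S\setminus T)$ (symmetric monoidal). $\mathbf V$ is $k$ on one-element sets and $0$ otherwise, with basis $t^i$ of $\mathbf V(\{i\})$, so $(\mathbf V\otimes M)(S)=\bigoplus_{j\in S}t^j\otimes M(S\setminus\{j\})$. A representation of $\underline{\mathfrak{gl}}(\mathbf V)$ is a pair $(M,a)$ with $a:\mathbf V\otimes M\to\mathbf V\otimes M$ such that $a_1a_2-a_2a_1=\tau(a_1-a_2)$ on $\mathbf V\otimes\mathbf V\otimes M$, where $\tau$ is the symmetry of the first two factors, $a_2=\mathrm{id}_{\mathbf V}\otimes a$, $a_1=\tau a_2\tau$. Operations: here $\alpha$ is regarded as the (natural in bijections) family $\alpha^S_{A,B}:M(S\setminus B)\to M(S\setminus A)$ indexed by disjoint one-element subsets $A=\{i\},B=\{j\}$, and $\omega$ as the family $\omega^S_{\emptyset,\emptyset}=\omega^S$. Two such families $\phi,\psi$ commute if for every finite set $S$ and pairwise disjoint subsets $A,B,C,D\subseteq S$ for which the maps are defined, $\psi^{S\setminus A}_{C,D}\circ\phi^{S\setminus D}_{A,B}=\phi^{S\setminus C}_{A,B}\circ\psi^{S\setminus B}_{C,D}$ as maps $M(S\setminus(B\cup D))\to M(S\setminus(A\cup C))$; a family commutes with itself if this holds with $\psi=\phi$. *)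

From HB Require Import structures.
From mathcomp Require Import all_boot all_order all_algebra.
From mathcomp Require Import finmap.
Set Implicit Arguments. Unset Strict Implicit. Unset Printing Implicit Defensive.
Import GRing.Theory.
Local Open Scope fset_scope.
Local Open Scope ring_scope.

(* FB-modules.  The category FB of finite sets and bijections is replaced by *)
(* the equivalent groupoid of finite subsets of nat.  A bijection A -> B is *)
(* represented by any f : nat -> nat injective on A with f @` A = B (two such *)
(* f represent the same bijection iff they agree on A).  An FB-module is a   *)
(* family of k-modules M A together with maps act A B f : M A -> M B,        *)
(* meaningful for such f, satisfying the functor laws.                       *)

Definition is_bij (f : nat -> nat) (A B : {fset nat}) : Prop :=
  {in A &, injective f} /\ f @` A = B.

Section FB.
Variable k : comPzRingType.
Variable M : {fset nat} -> lmodType k.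
Variable act : forall A B : {fset nat}, (nat -> nat) -> M A -> M B.
Arguments act : clear implicits.

Definition is_FBmod : Prop :=
  [/\ (forall A B f, is_bij f A B ->
         forall (c : k) (x y : M A),
           act A B f (c *: x + y) = c *: act A B f x + act A B f y),
      (forall A B f g, is_bij f A B -> {in A, f =1 g} ->
         act A B f =1 act A B g),
      (forall A, act A A id =1 id) &
      (forall A B C f g, is_bij f A B -> is_bij g B C ->
         forall x, act B C g (act A B f x) = act A C (g \o f) x)].

(* the identity bijection between two (equal) sets, used as a cast *)
Definition cast (A B : {fset nat}) : M A -> M B := act A B id.
Arguments cast : clear implicits.

(* A map a : V (x) M -> V (x) M, where (V (x) M)(S) = (+)_{j in S} t^j (x)   *)
(* M(S \ {j}), is given by its matrix coefficients                           *)
(*     a(t^j (x) x) = sum_{i in S} t^i (x) acomp S i j x,                    *)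
(* acomp S i j : M(S\{j}) -> M(S\{i}) for i, j in S.                         *)

Variable acomp : forall (S : {fset nat}) (i j : nat), M (S `\ j) -> M (S `\ i).
Arguments acomp : clear implicits.

Definition is_FBmap_VM : Prop :=
  (forall S i j, i \in S -> j \in S ->
     forall (c : k) (x y : M (S `\ j)),
       acomp S i j (c *: x + y) = c *: acomp S i j x + acomp S i j y) /\
  (forall S S' f, is_bij f S S' -> forall i j, i \in S -> j \in S ->
     forall x : M (S `\ j),
       act (S `\ i) (S' `\ f i) f (acomp S i j x)
       = acomp S' (f i) (f j) (act (S `\ j) (S' `\ f j) f x)).

(* (V (x) V (x) M)(S) = (+)_{p <> q in S} t^p (x) t^q (x) M((S\{p})\{q}).    *)
(* An element is a family of components x p q; only components with          *)
(* p, q in S, p <> q are meaningful (the others are ignored everywhere).     *)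
Definition VVM (S : {fset nat}) := forall p q : nat, M ((S `\ p) `\ q).

Definition valid2 (S : {fset nat}) (p q : nat) : bool :=
  [&& p \in S, q \in S & p != q].

(* a_2 = id_V (x) a :  t^p (x) t^q (x) x  |->  sum_{l in S\p} t^p (x) t^l (x) acomp (S\p) l q x *)
Definition a2 (S : {fset nat}) (x : VVM S) : VVM S :=
  fun u v => \sum_(q <- S `\ u) acomp (S `\ u) v q (x u q).

(* tau : t^p (x) t^q (x) x |-> t^q (x) t^p (x) x *)
Definition tau (S : {fset nat}) (x : VVM S) : VVM S :=
  fun u v => cast ((S `\ v) `\ u) ((S `\ u) `\ v) (x v u).

Definition a1 (S : {fset nat}) (x : VVM S) : VVM S := tau (a2 (tau x)).

Definition subVVM (S : {fset nat}) (x y : VVM S) : VVM S :=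
  fun u v => x u v - y u v.

Definition is_gl_rep : Prop :=
  forall (S : {fset nat}) (x : VVM S) (u v : nat), valid2 S u v ->
    subVVM (a1 (a2 x)) (a2 (a1 x)) u v = tau (subVVM (a1 x) (a2 x)) u v.

(* Operations: families phi^S_{A,B} : M(S\B) -> M(S\A) indexed by pairs of   *)
(* disjoint subsets (A,B) of a prescribed shape; the shape is given by an    *)
(* index type I and maps AI, BI : I -> {fset nat}.                           *)
(* Commutation: for all S and pairwise disjoint A,B,C,D subsets of S,        *)
(*   psi^{S\A}_{C,D} o phi^{S\D}_{A,B} = phi^{S\C}_{A,B} o psi^{S\B}_{C,D}   *)
(* as maps M(S\(B u D)) -> M(S\(A u C)) (identifying equal sets via cast).   *)

Definition pairwise_disjoint4 (A B C D : {fset nat}) : bool :=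
  [&& A `&` B == fset0, A `&` C == fset0, A `&` D == fset0,
      B `&` C == fset0, B `&` D == fset0 & C `&` D == fset0].

Definition commute_ops (I J : Type)
  (AI BI : I -> {fset nat}) (phi : forall S i, M (S `\` BI i) -> M (S `\` AI i))
  (AJ BJ : J -> {fset nat}) (psi : forall S j, M (S `\` BJ j) -> M (S `\` AJ j))
  : Prop :=
  forall (S : {fset nat}) (i : I) (j : J),
    let A := AI i in let B := BI i in let C := AJ j in let D := BJ j in
    A `<=` S -> B `<=` S -> C `<=` S -> D `<=` S -> pairwise_disjoint4 A B C D ->
    forall x : M (S `\` (B `|` D)),
      cast ((S `\` A) `\` C) (S `\` (A `|` C))
        (psi (S `\` A) j (cast ((S `\` D) `\` A) ((S `\` A) `\` D)
          (phi (S `\` D) i (cast (S `\` (B `|` D)) ((S `\` D) `\` B) x))))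
      =
      cast ((S `\` C) `\` A) (S `\` (A `|` C))
        (phi (S `\` C) i (cast ((S `\` B) `\` C) ((S `\` C) `\` B)
          (psi (S `\` B) j (cast (S `\` (B `|` D)) ((S `\` B) `\` D) x)))).

(* alpha^S_{i,j} : M(S\{j}) -> M(S\{i}), indexed by A = {i}, B = {j} *)
Definition alpha_A (ij : nat * nat) : {fset nat} := [fset ij.1].
Definition alpha_B (ij : nat * nat) : {fset nat} := [fset ij.2].
Definition alpha_op (S : {fset nat}) (ij : nat * nat) :
  M (S `\` alpha_B ij) -> M (S `\` alpha_A ij) := acomp S ij.1 ij.2.

Variable omega : forall T : {fset nat}, M T -> M T.
Arguments omega : clear implicits.

(* omega^S_{emptyset,emptyset} = omega^S *)
Definition omega_A (_ : unit) : {fset nat} := fset0.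
Definition omega_B (_ : unit) : {fset nat} := fset0.
Definition omega_op (S : {fset nat}) (t : unit) :
  M (S `\` omega_B t) -> M (S `\` omega_A t) :=
  fun x => cast S (S `\` fset0) (omega S (cast (S `\` fset0) S x)).

Definition cond_a : Prop :=
  [/\ commute_ops alpha_op alpha_op,
      commute_ops omega_op omega_op,
      commute_ops alpha_op omega_op &
      commute_ops omega_op alpha_op].

Definition cond_b : Prop :=
  forall (S : {fset nat}) (i j l : nat), i \in S -> j \in S -> l \in S ->
    i != j -> j != l -> i != l ->
    forall x : M ((S `\ j) `\ l),
      cast ((S `\ i) `\ j) ((S `\ j) `\ i)
        (acomp (S `\ i) j l (cast ((S `\ l) `\ i) ((S `\ i) `\ l)
          (acomp (S `\ l) i j (cast ((S `\ j) `\ l) ((S `\ l) `\ j) x))))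
      = acomp (S `\ j) i l x.

End FB.

From HB Require Import structures.
From mathcomp Require Import all_boot all_order all_algebra.
From mathcomp Require Import finmap.
From Stdlib Require Import Eqdep_dec.
Set Implicit Arguments. Unset Strict Implicit. Unset Printing Implicit Defensive.
Import GRing.Theory.
Local Open Scope fset_scope.
Local Open Scope ring_scope.

(* Evaluated at t^u (x) t^v, both sides of the gl relation are sums, over the
   components t^p (x) t^s (x) y of the input, of composites of at most two
   alpha's (an alpha with equal indices being an omega).  An input with a
   single nonzero component shows that the relation holds iff every such
   coefficient vanishes.  If exactly one of p = v, s = u holds, this is
   condition (b); if both hold it is automatic; if neither holds it says
   alpha^{S\v}_{u,p} alpha^{S\p}_{v,s} = alpha^{S\u}_{v,s} alpha^{S\s}_{u,p},
   i.e. alpha-alpha commutation for distinct indices and alpha-omega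
   commutation when p = u or s = v.  Condition (a) for omega with itself
   holds for free, and alpha-omega commutation on S is the case p = u of the
   coefficient on S u {p}, for a fresh point p. *)

Lemma exists_notin (S : {fset nat}) : exists p, p \notin S.
Proof.
exists (\max_(i <- S) i).+1; apply/negP => pS.
by have := leq_bigmax_seq (P := predT) (F := id) _ pS isT; rewrite ltnn.
Qed.

Lemma sum_fsetD1 (V : nmodType) (A : {fset nat}) a (F : nat -> V) :
  \sum_(q <- A `\ a) F q = \sum_(q <- A) (if q != a then F q else 0).
Proof.
rewrite -(big_fset_incl _ (fsubsetDl A [fset a])) => [|q qA]; last first.
  by rewrite !inE qA andbT negbK => ->.
by apply: eq_fbigr => q; rewrite !inE => /andP[->].
Qed.

Lemma fset1I_eq0 (a b : nat) : ([fset a] `&` [fset b] == fset0) = (a != b).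
Proof.
apply/idP/idP => [/eqP ab0 | ab].
  by apply/eqP => a_b; move: (in_fset0 b); rewrite -ab0 a_b !inE eqxx.
apply/eqP/fsetP => z; rewrite !inE.
by case: (eqVneq z a) => // ->; rewrite (negbTE ab).
Qed.

Ltac fset_eq :=
  apply/fsetP => z; rewrite !inE;
  repeat match goal with
  | Hp : is_true (?p \notin _) |- context [?z == ?p] =>
      is_var z; case: (eqVneq z p) => [->|_]; rewrite ?(negbTE Hp) ?eqxx
  end;
  by do ?[case: (_ == _) | case: (_ \in _)].

Section GlRepresentation.
Variables (k : comPzRingType) (M : {fset nat} -> lmodType k).
Variable act : forall A B : {fset nat}, (nat -> nat) -> M A -> M B.
Variable acomp : forall (S : {fset nat}) (i j : nat), M (S `\ j) -> M (S `\ i).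
Variable omega : forall T : {fset nat}, M T -> M T.
Arguments act : clear implicits.
Arguments acomp : clear implicits.
Arguments omega : clear implicits.

Hypothesis act_id : forall A, act A A id =1 id.
Hypothesis acompD : forall S i j, i \in S -> j \in S ->
  {morph acomp S i j : x y / x + y}.
Hypothesis acomp_diag : forall S j, j \in S ->
  forall x, acomp S j j x = omega (S `\ j) x.

Notation cst := (cast act).

Lemma castE A (x : M A) : cst A x = x.
Proof. exact: act_id. Qed.

Lemma castB A B (x y : M A) : A = B -> cst B (x - y) = cst B x - cst B y.
Proof. by move=> <-; rewrite !castE. Qed.

Lemma cast_sum A B I (r : seq I) (F : I -> M A) : A = B ->
  cst B (\sum_(i <- r) F i) = \sum_(i <- r) cst B (F i).
Proof. by move=> <-; rewrite castE; apply: eq_bigr => i _; rewrite castE. Qed.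

Lemma cast0 A B : A = B -> cst B (0 : M A) = 0.
Proof. by move=> <-; rewrite castE. Qed.

Lemma acomp0 S i j : i \in S -> j \in S -> acomp S i j 0 = 0.
Proof.
move=> iS jS; apply: (@addIr _ (acomp S i j 0)).
by rewrite -acompD // addr0 add0r.
Qed.

Lemma acomp_sum S i j I (r : seq I) (F : I -> M (S `\ j)) :
  i \in S -> j \in S ->
  acomp S i j (\sum_(t <- r) F t) = \sum_(t <- r) acomp S i j (F t).
Proof. by move=> iS jS; apply: big_morph; [exact: acompD | exact: acomp0]. Qed.

Ltac solve_in := rewrite ?inE; repeat (apply/andP; split); first [done | by rewrite eq_sym].

(* The coefficients of a1 a2, a2 a1, tau a1 and tau a2 from the input
   component t^p (x) t^s (x) y to the output component t^u (x) t^v; gl_coef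
   is that of a1 a2 - a2 a1 - tau (a1 - a2). *)
Local Unset Implicit Arguments.
Definition coef_a1a2 S u v p s (y : M ((S `\ p) `\ s)) : M ((S `\ u) `\ v) :=
  cst _ (acomp (S `\ v) u p (cst _ (acomp (S `\ p) v s y))).
Definition coef_a2a1 S u v p s (y : M ((S `\ p) `\ s)) : M ((S `\ u) `\ v) :=
  acomp (S `\ u) v s (cst _ (acomp (S `\ s) u p (cst _ y))).
Definition coef_tau_a1 S u v p s (y : M ((S `\ p) `\ s)) : M ((S `\ u) `\ v) :=
  cst _ (cst ((S `\ v) `\ u) (acomp (S `\ u) v p (cst _ y))).
Definition coef_tau_a2 S u v p s (y : M ((S `\ p) `\ s)) : M ((S `\ u) `\ v) :=
  cst _ (acomp (S `\ v) u s (cst _ y)).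

Definition gl_coef S u v p s (y : M ((S `\ p) `\ s)) : M ((S `\ u) `\ v) :=
  ((if (p != v) && (s != p) then coef_a1a2 S u v p s y else 0) -
   (if (s != u) && (p != s) then coef_a2a1 S u v p s y else 0)) -
  ((if (s == u) && (p != u) then coef_tau_a1 S u v p s y else 0) -
   (if (p == v) && (s != v) then coef_tau_a2 S u v p s y else 0)).
Local Set Implicit Arguments.

Section Expansion.
Variables (S : {fset nat}) (x : VVM M S) (u v : nat).
Hypotheses (uS : u \in S) (vS : v \in S) (uv : u != v).

Lemma a1a2_expand : a1 act acomp (a2 acomp x) u v
  = \sum_(p <- S) \sum_(s <- S)
      (if (p != v) && (s != p) then coef_a1a2 S u v p s (x p s) else 0).
Proof.
rewrite /a1 /a2 /tau cast_sum; last by fset_eq.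
rewrite sum_fsetD1; apply: eq_big_seq => p pS.
case: ifP => pv /=; last by rewrite big1.
rewrite cast_sum ?acomp_sum ?cast_sum; try by [fset_eq | solve_in].
by rewrite sum_fsetD1; apply: eq_big_seq => s sS; case: ifP.
Qed.

Lemma a2a1_expand : a2 acomp (a1 act acomp x) u v
  = \sum_(p <- S) \sum_(s <- S)
      (if (s != u) && (p != s) then coef_a2a1 S u v p s (x p s) else 0).
Proof.
rewrite exchange_big /a1 /a2 /tau /=.
rewrite sum_fsetD1; apply: eq_big_seq => s sS.
case: ifP => su /=; last by rewrite big1.
rewrite cast_sum ?acomp_sum; try by [fset_eq | solve_in].
by rewrite sum_fsetD1; apply: eq_big_seq => p pS; case: ifP.
Qed.

Lemma tau_a1_expand : tau act (a1 act acomp x) u v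
  = \sum_(p <- S) \sum_(s <- S)
      (if (s == u) && (p != u) then coef_tau_a1 S u v p s (x p s) else 0).
Proof.
rewrite /a1 /a2 /tau !cast_sum; try by fset_eq.
rewrite sum_fsetD1; apply: eq_big_seq => p pS.
rewrite (bigD1_seq u) ?fset_uniq //= eqxx.
rewrite [\sum_(s <- S | s != u) _]big1 ?addr0 => [|s /negbTE -> //].
by case: ifP.
Qed.

Lemma tau_a2_expand : tau act (a2 acomp x) u v
  = \sum_(p <- S) \sum_(s <- S)
      (if (p == v) && (s != v) then coef_tau_a2 S u v p s (x p s) else 0).
Proof.
rewrite (bigD1_seq v) ?fset_uniq //=.
rewrite [\sum_(p <- S | p != v) _]big1 ?addr0; last first.
  by move=> p /negbTE pv; rewrite big1 // => s _; rewrite pv.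
rewrite /a2 /tau cast_sum; last by fset_eq.
rewrite sum_fsetD1; apply: eq_big_seq => s sS.
by rewrite eqxx /= /coef_tau_a2 castE.
Qed.

Lemma gl_defect_expand :
  subVVM (a1 act acomp (a2 acomp x)) (a2 acomp (a1 act acomp x)) u v
  - tau act (subVVM (a1 act acomp x) (a2 acomp x)) u v
  = \sum_(p <- S) \sum_(s <- S) gl_coef S u v p s (x p s).
Proof.
have sum2B (f g : nat -> nat -> M ((S `\ u) `\ v)) :
    \sum_(p <- S) \sum_(s <- S) (f p s - g p s) =
    \sum_(p <- S) \sum_(s <- S) f p s - \sum_(p <- S) \sum_(s <- S) g p s.
  by rewrite -sumrB; apply: eq_bigr => p _; rewrite sumrB.
rewrite /gl_coef !sum2B -a1a2_expand -a2a1_expand -tau_a1_expand -tau_a2_expand.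
by rewrite /subVVM {1}/tau castB //; fset_eq.
Qed.

End Expansion.

Lemma gl_coef0 S u v p s : valid2 S u v -> p \in S -> s \in S ->
  gl_coef S u v p s 0 = 0.
Proof.
case/and3P => uS vS uv pS sS.
have if0 (b : bool) (c : M ((S `\ u) `\ v)) :
    (b -> c = 0) -> (if b then c else 0) = 0.
  by case: b => // ->.
rewrite /gl_coef !if0 ?subrr // => /andP[b1 b2];
  try move/eqP: b1 => ->;
  rewrite /coef_a1a2 /coef_a2a1 /coef_tau_a1 /coef_tau_a2;
  by repeat first [rewrite cast0; last by fset_eq | rewrite acomp0; [|solve_in|solve_in]].
Qed.

Definition gl_coefs_vanish : Prop :=
  forall S u v p s, valid2 S u v -> p \in S -> s \in S ->
    forall y, gl_coef S u v p s y = 0.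

Lemma is_gl_repE : is_gl_rep act acomp <-> gl_coefs_vanish.
Proof.
split=> [gl S u v p s uv pS sS y | coefs0 S x u v uv];
  have /and3P[uS vS u_v] := uv.
- pose x : VVM M S := fun p' s' =>
    if (p' == p) && (s' == s) then cst ((S `\ p') `\ s') y else 0.
  move/eqP: (gl S x u v uv); rewrite -subr_eq0 gl_defect_expand //.
  rewrite (bigD1_seq p) ?fset_uniq //= (bigD1_seq s) ?fset_uniq //=.
  rewrite big1_seq ?addr0 => [|s' /andP[s's s'S]]; last first.
    by rewrite /x eqxx (negbTE s's) gl_coef0.
  rewrite big1_seq ?addr0 => [|p' /andP[p'p p'S]]; last first.
    by rewrite big1_seq // => s' /andP[_ s'S]; rewrite /x (negbTE p'p) gl_coef0.
  by rewrite /x !eqxx castE => /eqP.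
- apply/eqP; rewrite -subr_eq0 gl_defect_expand //; apply/eqP.
  rewrite big1_seq // => p /andP[_ pS]; rewrite big1_seq // => s /andP[_ sS].
  exact: coefs0.
Qed.

(* The sets indexing M are often equal without being convertible, e.g.
   (S `\ u) `\ v and (S `\ v) `\ u; elements over them are compared packed. *)
Definition pack A (x : M A) : {A : {fset nat} & M A} := existT _ A x.

Lemma pack_inj A (x y : M A) : pack x = pack y -> x = y.
Proof. exact: inj_pair2_eq_dec (@eq_comparable _) _ _ _ _. Qed.

Lemma pack_cast A B (x : M A) : A = B -> pack (cst B x) = pack x.
Proof. by move=> <-; rewrite castE. Qed.

Lemma pack_omega A B (x : M A) (y : M B) :
  pack x = pack y -> pack (omega A x) = pack (omega B y).
Proof.
move=> xy; have AB : A = B := f_equal (@projT1 _ _) xy.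
by subst B; rewrite (pack_inj xy).
Qed.

Lemma pack_acomp S S' i j (x : M (S `\ j)) (y : M (S' `\ j)) :
  S = S' -> pack x = pack y -> pack (acomp S i j x) = pack (acomp S' i j y).
Proof. by move=> SS'; subst S' => /pack_inj ->. Qed.

Ltac pack_congr := repeat first
  [ match goal with |- ?a = ?b => constr_eq a b; reflexivity end
  | rewrite pack_cast; [|fset_eq]
  | apply: pack_omega
  | apply: pack_acomp; [fset_eq|] ].

Ltac transport E :=
  apply: pack_inj; apply: (etrans _ (etrans (congr1 (@pack _) E) _)); pack_congr.

Ltac rewrite_neq := repeat match goal with
  | h : is_true (?x != ?y) |- context [?x == ?y] => rewrite (negbTE h)
  | h : is_true (?x != ?y) |- context [?y == ?x] => rewrite (eq_sym y x) (negbTE h)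
  end.

Ltac solve_sub1 := rewrite fsub1set; solve_in.

Ltac pairwise_disjoint :=
  rewrite /pairwise_disjoint4 ?fsetI0 ?fset0I ?eqxx ?fset1I_eq0 /=;
  repeat (apply/andP; split); first [done | by rewrite eq_sym].

Lemma omega_acomp_commute : gl_coefs_vanish ->
  forall S a b, a \in S -> b \in S -> a != b -> forall x : M (S `\ b),
  omega (S `\ a) (acomp S a b x) = acomp S a b (omega (S `\ b) x).
Proof.
move=> coefs0 S a b aS bS ab x.
have [p pS] := exists_notin S.
have pa : p != a by apply: contraNneq pS => ->.
have pb : p != b by apply: contraNneq pS => ->.
have uv : valid2 (p |` S) p a by rewrite /valid2 !inE eqxx aS orbT pa.
have pS' : p \in p |` S by rewrite !inE eqxx.
have bS' : b \in p |` S by rewrite !inE bS orbT.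
have := coefs0 _ _ _ _ _ uv pS' bS' (cst (((p |` S) `\ p) `\ b) x).
rewrite /gl_coef (eq_sym b p) (negbTE pa) (negbTE pb) subrr subr0 => /eqP.
rewrite subr_eq0 => /eqP E.
have pSa : p \in (p |` S) `\ a by rewrite !inE eqxx pa.
have pSb : p \in (p |` S) `\ b by rewrite !inE eqxx pb.
rewrite /coef_a1a2 /coef_a2a1 !(acomp_diag pSa) !(acomp_diag pSb) in E.
by transport E.
Qed.

Lemma conds_of_gl_coefs_vanish : gl_coefs_vanish ->
  cond_a act acomp omega /\ cond_b act acomp.
Proof.
move=> coefs0; split; first split.
- move=> S [a b] [c d]; rewrite /alpha_A /alpha_B /alpha_op /= !fsub1set.
  move=> aS bS cS dS /and5P[]; rewrite !fset1I_eq0 => ab ac ad bc /andP[bd cd] x.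
  have ac' : valid2 S a c by rewrite /valid2 aS cS ac.
  move/eqP: (coefs0 S a c b d ac' bS dS (cst _ x)).
  rewrite /gl_coef; rewrite_neq; rewrite subrr subr0 subr_eq0 => /eqP E.
  by transport (esym E).
- by move=> S [] [] /= _ _ _ _ _ x; apply: pack_inj; rewrite /omega_op; pack_congr.
- move=> S [a b] [] /=; rewrite /alpha_A /alpha_B /alpha_op /omega_op /= !fsub1set.
  move=> aS bS _ _ /and5P[]; rewrite fset1I_eq0 => ab _ _ _ _ x.
  by transport (omega_acomp_commute coefs0 aS bS ab (cst (S `\ b) x)).
- move=> S [] [c d] /=; rewrite /alpha_A /alpha_B /alpha_op /omega_op /= !fsub1set.
  move=> _ _ cS dS /and5P[_ _ _ _ /andP[_]]; rewrite fset1I_eq0 => cd x.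
  by transport (esym (omega_acomp_commute coefs0 cS dS cd (cst (S `\ d) x))).
- move=> S i j l iS jS lS ij jl il x.
  have ij' : valid2 S i j by rewrite /valid2 iS jS ij.
  move/eqP: (coefs0 S i j j l ij' jS lS x).
  rewrite /gl_coef eqxx; rewrite_neq; rewrite !sub0r opprK addrC subr_eq0 => /eqP E.
  by transport (esym E).
Qed.

Lemma coef_a1a2_eq_a2a1 : cond_a act acomp omega ->
  forall S u v p s, valid2 S u v -> p \in S -> s \in S ->
  p != v -> s != u -> p != s ->
  forall y, coef_a1a2 S u v p s y = coef_a2a1 S u v p s y.
Proof.
case=> commute_aa _ commute_ao _ S u v p s /and3P[uS vS uv] pS sS pv su ps y.
rewrite /coef_a1a2 /coef_a2a1.
have [pu|pu] := eqVneq p u; have [sv|sv] := eqVneq s v.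
- subst p s; have uSv : u \in S `\ v by solve_in. have vSu : v \in S `\ u by solve_in.
  rewrite !(acomp_diag uSv) !(acomp_diag vSu).
  by apply: pack_inj; pack_congr.
- subst p; have vSu : [fset v] `<=` S `\ u by solve_sub1.
  have sSu : [fset s] `<=` S `\ u by solve_sub1.
  have disj : pairwise_disjoint4 [fset v] [fset s] fset0 fset0 by pairwise_disjoint.
  have := commute_ao _ (v, s) tt vSu sSu (fsub0set _) (fsub0set _) disj (cst _ y).
  rewrite /alpha_op /omega_op /= => E.
  have uSv : u \in S `\ v by solve_in. have uSs : u \in S `\ s by solve_in.
  rewrite !(acomp_diag uSv) !(acomp_diag uSs).
  by transport E.
- subst s; have uSv : [fset u] `<=` S `\ v by solve_sub1.
  have pSv : [fset p] `<=` S `\ v by solve_sub1.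
  have disj : pairwise_disjoint4 [fset u] [fset p] fset0 fset0 by pairwise_disjoint.
  have := commute_ao _ (u, p) tt uSv pSv (fsub0set _) (fsub0set _) disj (cst _ y).
  rewrite /alpha_op /omega_op /= => E.
  have vSp : v \in S `\ p by solve_in. have vSu : v \in S `\ u by solve_in.
  rewrite !(acomp_diag vSp) !(acomp_diag vSu).
  by transport (esym E).
- have [uS1 pS1 vS1 sS1] : [/\ [fset u] `<=` S, [fset p] `<=` S,
                              [fset v] `<=` S & [fset s] `<=` S] by split; solve_sub1.
  have disj : pairwise_disjoint4 [fset u] [fset p] [fset v] [fset s]
    by pairwise_disjoint.
  have := commute_aa S (u, p) (v, s) uS1 pS1 vS1 sS1 disj (cst _ y).
  rewrite /alpha_op /= => E.
  by transport (esym E).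
Qed.

Lemma gl_coefs_vanish_of_conds :
  cond_a act acomp omega -> cond_b act acomp -> gl_coefs_vanish.
Proof.
move=> conda condb S u v p s uv pS sS y; have /and3P[uS vS u_v] := uv.
rewrite /gl_coef.
have [ps|ps] := eqVneq p s; first by subst s; rewrite ?andbF ?andbN !subrr.
have [pv|pv] := eqVneq p v; have [su|su] := eqVneq s u; subst; rewrite_neq => /=.
- have uSv : u \in S `\ v by solve_in. have vSu : v \in S `\ u by solve_in.
  rewrite /coef_tau_a1 /coef_tau_a2 !(acomp_diag uSv) !(acomp_diag vSu).
  apply/eqP; rewrite subrr sub0r oppr_eq0 subr_eq0; apply/eqP.
  by apply: pack_inj; pack_congr.
- have us : u != s by rewrite eq_sym.
  have := condb S u v s uS vS sS u_v ps us (cst _ y) => E.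
  apply/eqP; rewrite !sub0r opprK addrC subr_eq0; apply/eqP.
  by transport (esym E).
- have vu : v != u by rewrite eq_sym.
  have up : u != p by rewrite eq_sym.
  have vp : v != p by rewrite eq_sym.
  have := condb S v u p vS uS pS vu up vp (cst _ y) => E.
  apply/eqP; rewrite !subr0 subr_eq0; apply/eqP.
  by transport E.
- by rewrite (coef_a1a2_eq_a2a1 conda uv) // !subrr.
Qed.

End GlRepresentation.

Theorem proposition4p6 (k : comPzRingType) (M : {fset nat} -> lmodType k)
  (act : forall A B : {fset nat}, (nat -> nat) -> M A -> M B)
  (acomp : forall (S : {fset nat}) (i j : nat), M (S `\ j) -> M (S `\ i))
  (omega : forall T : {fset nat}, M T -> M T) :
  is_FBmod act ->
  is_FBmap_VM act acomp ->
  (forall (S : {fset nat}) (j : nat), j \in S ->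
     forall x : M (S `\ j), acomp S j j x = omega (S `\ j) x) ->
  (is_gl_rep act acomp <-> cond_a act acomp omega /\ cond_b act acomp).
Proof.
move=> [_ _ act_id _] [acomp_linear _] acomp_diag.
have acompD S i j : i \in S -> j \in S -> {morph acomp S i j : x y / x + y}.
  by move=> iS jS x y; rewrite -[x]scale1r acomp_linear // !scale1r.
rewrite (is_gl_repE act_id acompD); split.
- exact: conds_of_gl_coefs_vanish.
- by case; exact: gl_coefs_vanish_of_conds.
Qed.
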